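(* Let $H\subseteq G$ be a closed inclusion of affine algebraic groups over an algebraically closed field $\Bbbk$. If $H$ is exact in $G$, then $H$ is observable in $G$.
   Context: $H$ acts on $\Bbbk[G]$ by right translations $(x\cdot f)(y)=f(yx)$, making $\Bbbk[G]$ a rational $H$--module algebra. A $(\Bbbk[G],H)$--module is a rational $H$--module $M$ which is a $\Bbbk[G]$--module with $x\cdot(rm)=(x\cdot r)(x\cdot m)$; morphisms are $\Bbbk[G]$--linear $H$--equivariant maps. $H$ is exact in $G$ if for every short exact sequence $0\to P\to Q\to R\to0$ of $(\Bbbk[G],H)$--modules, the sequence $0\to{}^HP\to{}^HQ\to{}^HR\to0$ of $H$--fixed vectors is exact. A closed subgroup $H\subseteq G$ is observable in $G$ if every finite dimensional rational $H$--module is isomorphic to an $H$--submodule of the restriction to $H$ of some finite dimensional rational $G$--module. *)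

(* Affine algebraic groups over an algebraically closed
   field k are modelled classically, as Zariski-closed subgroups of GL_n(k)
   (every affine algebraic group admits such a closed embedding). *)
From HB Require Import structures.
From mathcomp Require Import all_boot all_order all_algebra.
Set Implicit Arguments. Unset Strict Implicit. Unset Printing Implicit Defensive.
Import GRing.Theory.
Local Open Scope ring_scope.

Section AlgGroups.
Variables (k : fieldType) (n : nat).
Local Notation Mat := 'M[k]_n.

Inductive polyfun : (Mat -> k) -> Prop :=
| pf_const (c : k) : polyfun (fun _ => c)
| pf_coord (i j : 'I_n) : polyfun (fun A => A i j)
| pf_add f g : polyfun f -> polyfun g -> polyfun (fun A => f A + g A)
| pf_mul f g : polyfun f -> polyfun g -> polyfun (fun A => f A * g A).

Definition zariski_closed (X : Mat -> Prop) : Prop :=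
  exists S : (Mat -> k) -> Prop, (forall p, S p -> polyfun p) /\
    forall A, X A <-> (A \in unitmx /\ forall p, S p -> p A = 0).

Definition is_subgroup (X : Mat -> Prop) : Prop :=
  [/\ X 1%:M, (forall A B, X A -> X B -> X (A *m B)) &
      (forall A, X A -> X (invmx A))].

Definition closed_subgroup (X : Mat -> Prop) : Prop :=
  zariski_closed X /\ is_subgroup X.

(* f restricted to X is a regular function on X, i.e. an element of k[X]
   (k[GL_n] = k[x_ij, 1/det]) *)
Definition regular_on (X : Mat -> Prop) (f : Mat -> k) : Prop :=
  exists (p : Mat -> k) (N : nat), polyfun p /\
    forall A, X A -> f A = p A / \det A ^+ N.

Record rational_module (X : Mat -> Prop) (M : lmodType k)
    (act : Mat -> M -> M) : Prop := {
  rm_lin : forall x, X x -> forall (a : k) (u v : M),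
      act x (a *: u + v) = a *: act x u + act x v;
  rm_one : forall m, act 1%:M m = m;
  rm_mul : forall x y m, X x -> X y -> act (x *m y) m = act x (act y m);
  rm_loc : forall m, exists (r : nat) (ms : 'I_r -> M) (fs : 'I_r -> Mat -> k),
      (forall i, regular_on X (fs i)) /\
      forall x, X x -> act x m = \sum_(i < r) fs i x *: ms i }.

(* (k[G],H)-modules: mact f m is the action of the regular function f
   (as an element of k[G]) on m; act x is the H-action. *)
Record kGH_module (G H : Mat -> Prop) (M : lmodType k)
    (mact : (Mat -> k) -> M -> M) (act : Mat -> M -> M) : Prop := {
  km_rat : rational_module H act;
  km_lin : forall f, regular_on G f -> forall (a : k) (u v : M),
      mact f (a *: u + v) = a *: mact f u + mact f v;
  km_add : forall f g m, regular_on G f -> regular_on G g ->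
      mact (fun A => f A + g A) m = mact f m + mact g m;
  km_mul : forall f g m, regular_on G f -> regular_on G g ->
      mact (fun A => f A * g A) m = mact f (mact g m);
  km_const : forall (c : k) m, mact (fun _ => c) m = c *: m;
  km_ext : forall f g, regular_on G f -> (forall A, G A -> f A = g A) ->
      mact f = mact g;
  km_compat : forall x f m, H x -> regular_on G f ->
      act x (mact f m) = mact (fun y => f (y *m x)) (act x m) }.

Definition kGH_morphism (G H : Mat -> Prop) (P Q : lmodType k)
    (mP : (Mat -> k) -> P -> P) (aP : Mat -> P -> P)
    (mQ : (Mat -> k) -> Q -> Q) (aQ : Mat -> Q -> Q) (phi : P -> Q) : Prop :=
  [/\ forall (a : k) (u v : P), phi (a *: u + v) = a *: phi u + phi v,
      forall f m, regular_on G f -> phi (mP f m) = mQ f (phi m) &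
      forall x m, H x -> phi (aP x m) = aQ x (phi m)].

Definition fixed_vec (H : Mat -> Prop) (M : lmodType k)
    (act : Mat -> M -> M) (m : M) : Prop := forall x, H x -> act x m = m.

Definition exact_in (G H : Mat -> Prop) : Prop :=
  forall (P Q R : lmodType k)
    (mP : (Mat -> k) -> P -> P) (aP : Mat -> P -> P)
    (mQ : (Mat -> k) -> Q -> Q) (aQ : Mat -> Q -> Q)
    (mR : (Mat -> k) -> R -> R) (aR : Mat -> R -> R)
    (f : P -> Q) (g : Q -> R),
    kGH_module G H mP aP -> kGH_module G H mQ aQ -> kGH_module G H mR aR ->
    kGH_morphism G H mP aP mQ aQ f -> kGH_morphism G H mQ aQ mR aR g ->
    injective f -> (forall q, g q = 0 <-> exists p, f p = q) ->
    (forall r, exists q, g q = r) ->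
    [/\ (forall p1 p2, fixed_vec H aP p1 -> fixed_vec H aP p2 -> f p1 = f p2 -> p1 = p2),
        (forall q, fixed_vec H aQ q -> g q = 0 ->
           exists p, fixed_vec H aP p /\ f p = q) &
        (forall r, fixed_vec H aR r -> exists q, fixed_vec H aQ q /\ g q = r)].

Definition observable (G H : Mat -> Prop) : Prop :=
  forall (V : vectType k) (aV : Mat -> V -> V), rational_module H aV ->
    exists (W : vectType k) (aW : Mat -> W -> W) (phi : V -> W),
      [/\ rational_module G aW,
          forall (a : k) (u v : V), phi (a *: u + v) = a *: phi u + phi v,
          injective phi &
          forall x v, H x -> phi (aV x v) = aW x (phi v)].

End AlgGroups.

(* Let V be a rational H-module and E = End(V), on which H acts by
   x.e = e o x^-1.  Twisting right translations by this action makes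
     0 -> I(H) ⊗ E -> k[G] ⊗ E -> k[H] ⊗ E -> 0
   an exact sequence of (k[G],H)-modules, and the function h |-> (action of h
   on V) is an H-fixed vector of k[H] ⊗ E.  Exactness of H lifts it to an
   H-fixed F in k[G] ⊗ E, i.e. F(y h) = F(y) o h, with F(1) = id.  Then
   v |-> (y |-> F(y) v) embeds V H-equivariantly into k[G] ⊗ V, on which G acts
   by right translations; this action is locally finite, so the image lies in a
   finite-dimensional rational G-module. *)

From HB Require Import structures.
From mathcomp Require Import all_boot all_order all_algebra.
From mathcomp Require Import boolp ring zify.
Set Implicit Arguments. Unset Strict Implicit. Unset Printing Implicit Defensive.
Import GRing.Theory.
Local Open Scope ring_scope.

Section PolynomialFunctions.
Variables (k : fieldType) (n : nat).
Local Notation Mat := 'M[k]_n.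
Implicit Types (f g p : Mat -> k).

Lemma polyfun_ext f g : f =1 g -> polyfun f -> polyfun g.
Proof. by move=> /funext ->. Qed.

Lemma polyfun_sum (I : Type) (s : seq I) (F : I -> Mat -> k) :
  (forall i, polyfun (F i)) -> polyfun (fun A => \sum_(i <- s) F i A).
Proof.
move=> hF; elim: s => [|i s IH].
  by apply: (polyfun_ext (f := fun _ => 0)) => [A|]; rewrite ?big_nil //; apply: pf_const.
apply: (polyfun_ext (f := fun A => F i A + \sum_(j <- s) F j A)) => [A|].
  by rewrite big_cons.
exact: pf_add.
Qed.

Lemma polyfun_prod (I : Type) (s : seq I) (F : I -> Mat -> k) :
  (forall i, polyfun (F i)) -> polyfun (fun A => \prod_(i <- s) F i A).
Proof.
move=> hF; elim: s => [|i s IH].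
  by apply: (polyfun_ext (f := fun _ => 1)) => [A|]; rewrite ?big_nil //; apply: pf_const.
apply: (polyfun_ext (f := fun A => F i A * \prod_(j <- s) F j A)) => [A|].
  by rewrite big_cons.
exact: pf_mul.
Qed.

Lemma polyfun_exp f m : polyfun f -> polyfun (fun A => f A ^+ m).
Proof.
move=> hf; apply: (polyfun_ext (f := fun A => \prod_(i < m) f A)) => [A|].
  by rewrite prodr_const card_ord.
exact: polyfun_prod.
Qed.

Lemma polyfun_det_comp m (M : Mat -> 'M[k]_m) :
  (forall i j, polyfun (fun A => M A i j)) -> polyfun (fun A => \det (M A)).
Proof.
move=> hM; apply: polyfun_sum => s; apply: pf_mul; first exact: pf_const.
by apply: polyfun_prod => i; apply: hM.
Qed.

Lemma polyfun_det : polyfun (fun A : Mat => \det A).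
Proof. by apply: (@polyfun_det_comp n id) => i j; apply: pf_coord. Qed.

Lemma polyfun_adj i j : polyfun (fun A : Mat => \adj A i j).
Proof.
apply: (polyfun_ext (f := fun A => cofactor A j i)) => [A|]; first by rewrite mxE.
apply: pf_mul; first exact: pf_const.
apply: (@polyfun_det_comp n.-1 (fun A => row' j (col' i A))) => a b.
by apply: (polyfun_ext (f := fun A => A _ _)) => [A|]; [rewrite !mxE | apply: pf_coord].
Qed.

Lemma polyfun_mulmxr f (x : Mat) : polyfun f -> polyfun (fun A => f (A *m x)).
Proof.
elim=> {f} [c|i j|f g _ hf _ hg|f g _ hf _ hg]; last 2 first.
- exact: pf_add.
- exact: pf_mul.
- exact: pf_const.
apply: (polyfun_ext (f := fun A => \sum_(l <- index_enum 'I_n) A i l * x l j)).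
  by move=> A; rewrite mxE.
by apply: polyfun_sum => l; apply: pf_mul; [apply: pf_coord | apply: pf_const].
Qed.

(* Cramer's rule: the entries of [invmx A] are those of [\adj A] over [\det A]. *)
Lemma polyfun_invmx p : polyfun p -> exists (q : Mat -> k) (N : nat),
  polyfun q /\ forall A, A \in unitmx -> p (invmx A) = q A / \det A ^+ N.
Proof.
elim=> {p} [c|i j|f g _ [q1 [N1 [hq1 e1]]] _ [q2 [N2 [hq2 e2]]]
               |f g _ [q1 [N1 [hq1 e1]]] _ [q2 [N2 [hq2 e2]]]].
- by exists (fun _ => c), 0%N; split=> [|A _]; [apply: pf_const | rewrite expr0 divr1].
- exists (fun A => \adj A i j), 1%N; split=> [|A uA]; first exact: polyfun_adj.
  by rewrite /invmx uA mxE expr1 mulrC.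
- exists (fun A => q1 A * \det A ^+ N2 + q2 A * \det A ^+ N1), (N1 + N2)%N.
  split=> [|A uA].
    by apply: pf_add; apply: pf_mul => //; apply/polyfun_exp/polyfun_det.
  have d0 : \det A != 0 by rewrite -unitfE -unitmxE.
  by rewrite e1 // e2 // exprD; field; rewrite ?expf_neq0.
- exists (fun A => q1 A * q2 A), (N1 + N2)%N; split=> [|A uA]; first exact: pf_mul.
  by rewrite e1 // e2 // exprD invfM mulrACA.
Qed.

Lemma polyfun_translates p : polyfun p ->
  exists (I : finType) (a c : I -> Mat -> k),
    [/\ forall i, polyfun (a i), forall i, polyfun (c i) &
        forall y x, p (y *m x) = \sum_i c i x * a i y].
Proof.
elim=> {p} [c|i j|f g _ [I1 [a1 [c1 [ha1 hc1 t1]]]] _ [I2 [a2 [c2 [ha2 hc2 t2]]]]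
               |f g _ [I1 [a1 [c1 [ha1 hc1 t1]]]] _ [I2 [a2 [c2 [ha2 hc2 t2]]]]].
- exists 'I_1, (fun _ _ => 1), (fun _ _ => c).
  by split=> [_|_|y x]; rewrite ?big_ord1 ?mulr1 //; apply: pf_const.
- exists 'I_n, (fun l y => y i l), (fun l x => x l j).
  by split=> [l|l|y x]; [apply: pf_coord | apply: pf_coord | rewrite mxE;
    apply: eq_bigr => l _; rewrite mulrC].
- exists (I1 + I2)%type, (fun i => match i with inl i => a1 i | inr i => a2 i end),
    (fun i => match i with inl i => c1 i | inr i => c2 i end).
  by split=> [[]|[]|y x] //; rewrite big_sumType /= t1 t2.
- exists (I1 * I2)%type, (fun i y => a1 i.1 y * a2 i.2 y),
    (fun i x => c1 i.1 x * c2 i.2 x).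
  split=> [i|i|y x]; [exact: pf_mul | exact: pf_mul |].
  rewrite t1 t2 big_distrlr /= pair_big /=.
  by apply: eq_bigr => -[i1 i2] _ /=; rewrite mulrACA.
Qed.

End PolynomialFunctions.

Section RegularFunctions.
Variables (k : fieldType) (n : nat).
Local Notation Mat := 'M[k]_n.
Implicit Types (f g : Mat -> k) (X Y : Mat -> Prop).

Lemma regular_ext X f g :
  regular_on X f -> (forall A, X A -> f A = g A) -> regular_on X g.
Proof. by case=> p [N [hp e]] fg; exists p, N; split=> // A XA; rewrite -fg ?e. Qed.

Lemma regular_onS X Y f :
  (forall A, Y A -> X A) -> regular_on X f -> regular_on Y f.
Proof. by move=> YX [p [N [hp e]]]; exists p, N; split=> // A /YX; apply: e. Qed.

Lemma regular_polyfun X f : polyfun f -> regular_on X f.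
Proof. by move=> hf; exists f, 0%N; split=> // A _; rewrite expr0 divr1. Qed.

Lemma regular_const X c : regular_on X (fun _ => c).
Proof. exact/regular_polyfun/pf_const. Qed.

Lemma regular_mul X f g : regular_on X f -> regular_on X g ->
  regular_on X (fun A => f A * g A).
Proof.
case=> p [N [hp ep]] [q [M [hq eq]]]; exists (fun A => p A * q A), (N + M)%N.
by split=> [|A XA]; [apply: pf_mul | rewrite ep // eq // exprD invfM mulrACA].
Qed.

Lemma regular_mulmxr X f x : (forall y, X y -> X (y *m x)) ->
  regular_on X f -> regular_on X (fun y => f (y *m x)).
Proof.
move=> Xx [p [N [hp ep]]]; exists (fun y => p (y *m x) / \det x ^+ N), N.
split=> [|y Xy]; first by apply: pf_mul; [apply: polyfun_mulmxr | apply: pf_const].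
by rewrite ep; [rewrite det_mulmx exprMn invfM mulrA mulrAC | apply: Xx].
Qed.

Lemma regular_extend X Y f : regular_on X f ->
  exists f', regular_on Y f' /\ forall A, X A -> f' A = f A.
Proof.
case=> p [N [hp ep]]; exists (fun A => p A / \det A ^+ N).
by split=> [|A /ep //]; exists p, N.
Qed.

Lemma regular_translates X f : regular_on X f ->
  exists (I : finType) (a c : I -> Mat -> k),
    [/\ forall i Y, regular_on Y (a i), forall i Y, regular_on Y (c i) &
        forall y x, X (y *m x) -> f (y *m x) = \sum_i c i x * a i y].
Proof.
case=> p [N [hp ep]]; have [I [a [c [ha hc tr]]]] := polyfun_translates hp.
exists I, (fun i y => a i y / \det y ^+ N), (fun i x => c i x / \det x ^+ N).
split=> [i Y|i Y|y x Xyx]; [by exists (a i), N | by exists (c i), N |].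
rewrite ep // det_mulmx tr exprMn invfM mulr_suml; apply: eq_bigr => i _; ring.
Qed.

Variable X : Mat -> Prop.
Hypothesis X_unit : forall A, X A -> A \in unitmx.

Lemma regular_add f g : regular_on X f -> regular_on X g ->
  regular_on X (fun A => f A + g A).
Proof.
case=> p [N [hp ep]] [q [M [hq eq]]].
exists (fun A => p A * \det A ^+ M + q A * \det A ^+ N), (N + M)%N; split=> [|A XA].
  by apply: pf_add; apply: pf_mul => //; apply/polyfun_exp/polyfun_det.
have d0 : \det A != 0 by rewrite -unitfE -unitmxE X_unit.
by rewrite ep // eq // exprD; field; rewrite ?expf_neq0.
Qed.

Lemma regular_sum (I : Type) (s : seq I) (F : I -> Mat -> k) :
  (forall i, regular_on X (F i)) -> regular_on X (fun A => \sum_(i <- s) F i A).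
Proof.
move=> hF; elim: s => [|i s IH].
  by apply: (regular_ext (regular_const X 0)) => A _; rewrite big_nil.
by apply: (regular_ext (regular_add (hF i) IH)) => A _; rewrite big_cons.
Qed.

Lemma regular_invmx f : (forall A, X A -> X (invmx A)) ->
  regular_on X f -> regular_on X (fun A => f (invmx A)).
Proof.
move=> X_inv [p [N [hp ep]]]; have [q [M [hq eq]]] := polyfun_invmx hp.
exists (fun A => q A * \det A ^+ N), M; split=> [|A XA].
  by apply: pf_mul => //; apply/polyfun_exp/polyfun_det.
rewrite ep; last exact: X_inv.
by rewrite eq ?X_unit // det_inv exprVn invrK mulrAC.
Qed.

End RegularFunctions.

Section LinearMaps.
Variables (k : fieldType) (U W : lmodType k) (f : U -> W).
Hypothesis f_lin : linear f.

Let lf : {linear U -> W} := HB.pack f (GRing.isLinear.Build k U W _ f f_lin).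

Lemma lin0 : f 0 = 0.
Proof. exact: (linear0 lf). Qed.

Lemma linZ a u : f (a *: u) = a *: f u.
Proof. exact: (linearZ_LR lf). Qed.

Lemma linB u v : f (u - v) = f u - f v.
Proof. exact: (linearB lf). Qed.

Lemma lin_sum (I : Type) (s : seq I) (F : I -> U) :
  f (\sum_(i <- s) F i) = \sum_(i <- s) f (F i).
Proof. exact: (linear_sum lf). Qed.

End LinearMaps.

Lemma lfunE_lin (k : fieldType) (V W : vectType k) (f : V -> W) :
  linear f -> forall v, linfun f v = f v.
Proof.
move=> f_lin; exact: (lfunE (HB.pack f (GRing.isLinear.Build k V W _ f f_lin))).
Qed.

(* On [K], [Phi] agrees with an element of the tensor product k[K] ⊗ E. *)
Definition tensor_on (k : fieldType) (n : nat) (K : 'M[k]_n -> Prop) (E : lmodType k)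
    (Phi : 'M[k]_n -> E) :=
  exists (I : finType) (g : I -> 'M[k]_n -> k) (S : I -> E),
    (forall i, regular_on K (g i)) /\ forall x, K x -> Phi x = \sum_i g i x *: S i.

Section Tensors.
Variables (k : fieldType) (n : nat).
Local Notation Mat := 'M[k]_n.
Variables (K : Mat -> Prop) (E E' : lmodType k).

Lemma tensor_on_ext (Phi Psi : Mat -> E) :
  tensor_on K Phi -> (forall x, K x -> Phi x = Psi x) -> tensor_on K Psi.
Proof. by case=> I [g [S [hg e]]] h; exists I, g, S; split=> // x Kx; rewrite -h ?e. Qed.

Lemma tensor_on_const (e : E) : tensor_on K (fun _ => e).
Proof.
exists 'I_1, (fun _ _ => 1), (fun _ => e).
by split=> [_|x _]; [apply: regular_const | rewrite big_ord1 scale1r].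
Qed.

Lemma tensor_onD (Phi Psi : Mat -> E) :
  tensor_on K Phi -> tensor_on K Psi -> tensor_on K (fun x => Phi x + Psi x).
Proof.
case=> I1 [g1 [S1 [hg1 e1]]] [I2 [g2 [S2 [hg2 e2]]]].
exists (I1 + I2)%type, (fun i => match i with inl i => g1 i | inr i => g2 i end),
  (fun i => match i with inl i => S1 i | inr i => S2 i end).
by split=> [[]|x Kx] //; rewrite big_sumType /= e1 ?e2.
Qed.

Lemma tensor_on_sum (I : Type) (s : seq I) (F : I -> Mat -> E) :
  (forall i, tensor_on K (F i)) -> tensor_on K (fun x => \sum_(i <- s) F i x).
Proof.
move=> hF; elim: s => [|i s IH].
  by apply: (tensor_on_ext (tensor_on_const 0)) => x _; rewrite big_nil.
by apply: (tensor_on_ext (tensor_onD (hF i) IH)) => x _; rewrite big_cons.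
Qed.

Lemma tensor_onZ (g : Mat -> k) (Phi : Mat -> E) :
  regular_on K g -> tensor_on K Phi -> tensor_on K (fun x => g x *: Phi x).
Proof.
move=> hg [I [h [S [hh e]]]]; exists I, (fun i x => g x * h i x), S.
split=> [i|x Kx]; first exact: regular_mul.
by rewrite e // scaler_sumr; apply: eq_bigr => i _; rewrite scalerA.
Qed.

Lemma tensor_on_linear (L : E -> E') (Phi : Mat -> E) :
  linear L -> tensor_on K Phi -> tensor_on K (fun x => L (Phi x)).
Proof.
move=> L_lin [I [h [S [hh e]]]]; exists I, h, (fun i => L (S i)); split=> // x Kx.
by rewrite e // lin_sum //; apply: eq_bigr => i _; rewrite linZ.
Qed.

Lemma tensor_on_ord (Phi : Mat -> E) : tensor_on K Phi ->
  exists r (S : 'I_r -> E) (g : 'I_r -> Mat -> k),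
    (forall i, regular_on K (g i)) /\ forall x, K x -> Phi x = \sum_(i < r) g i x *: S i.
Proof.
case=> I [h [S [hh e]]]; exists #|I|, (fun j => S (enum_val j)), (fun j => h (enum_val j)).
split=> // x Kx; rewrite e // -(big_enum_val (fun i => h i x *: S i)).
by apply: eq_bigl => i; rewrite inE.
Qed.

Lemma tensor_on_mulmxr (Phi : Mat -> E) (x0 : Mat) :
  (forall A, K A -> K (A *m x0)) -> tensor_on K Phi -> tensor_on K (fun x => Phi (x *m x0)).
Proof.
move=> Kx0 [I [h [S [hh e]]]]; exists I, (fun i x => h i (x *m x0)), S.
by split=> [i|x Kx]; [apply: regular_mulmxr | apply/e/Kx0].
Qed.

Lemma tensor_on_invmx (Phi : Mat -> E) : (forall A, K A -> A \in unitmx) ->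
  (forall A, K A -> K (invmx A)) -> tensor_on K Phi -> tensor_on K (fun x => Phi (invmx x)).
Proof.
move=> K_unit K_inv [I [h [S [hh e]]]]; exists I, (fun i x => h i (invmx x)), S.
by split=> [i|x Kx]; [apply: regular_invmx | apply/e/K_inv].
Qed.

Lemma tensor_onS (K' : Mat -> Prop) (Phi : Mat -> E) :
  (forall x, K' x -> K x) -> tensor_on K Phi -> tensor_on K' Phi.
Proof.
move=> sK [I [h [S [hh e]]]]; exists I, h, S.
by split=> [i|x /sK]; [apply: regular_onS (hh i) | apply: e].
Qed.

End Tensors.

Section FiniteSpans.
Variables (k : fieldType) (M : lmodType k).

Lemma row_embedding_extend r (io : 'rV[k]_r -> M) (u0 : M) :
  linear io -> injective io -> exists r' (io' : 'rV[k]_r' -> M),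
    [/\ linear io', injective io', (forall w, exists w', io' w' = io w) &
        exists w', io' w' = u0].
Proof.
move=> io_lin io_inj; have [[w0 <-]|nin] := pselect (exists w, io w = u0).
  by exists r, io; split=> //; [move=> w; exists w | exists w0].
pose io' (w : 'rV[k]_(r + 1)) := io (lsubmx w) + rsubmx w 0 0 *: u0.
exists (r + 1)%N, io'; split.
- move=> a v w; rewrite /io' linearP io_lin.
  have -> : rsubmx (a *: v + w) 0 0 = a * rsubmx v 0 0 + rsubmx w 0 0.
    by rewrite linearP !mxE.
  by rewrite scalerDl scalerDr -scalerA addrACA.
- move=> v w e.
  have er : rsubmx v 0 0 = rsubmx w 0 0.
    apply: contra_notP nin => /eqP; rewrite eq_sym -subr_eq0 => nz.
    exists ((rsubmx w 0 0 - rsubmx v 0 0)^-1 *: (lsubmx v - lsubmx w)).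
    rewrite linZ // linB //.
    have -> : io (lsubmx v) = io (lsubmx w) + rsubmx w 0 0 *: u0 - rsubmx v 0 0 *: u0.
      by apply: (addIr (rsubmx v 0 0 *: u0)); rewrite subrK; exact: e.
    set a := io (lsubmx w); rewrite -[a + _ - _]addrA [a + _]addrC addrK.
    by rewrite -scalerBl scalerA mulVf ?scale1r.
  have el : lsubmx v = lsubmx w by apply: io_inj; apply: (addIr (rsubmx v 0 0 *: u0)); rewrite {2}er.
  rewrite -(hsubmxK v) -(hsubmxK w) el; congr row_mx.
  by apply/matrixP => i j; rewrite !ord1.
- by move=> w; exists (row_mx w 0); rewrite /io' row_mxKl row_mxKr mxE scale0r addr0.
- exists (row_mx 0 (const_mx 1)).
  by rewrite /io' row_mxKl row_mxKr mxE scale1r lin0 // add0r.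
Qed.

Lemma row_embedding (I : finType) (u : I -> M) : exists r (io : 'rV[k]_r -> M),
  [/\ linear io, injective io & forall i, exists w, io w = u i].
Proof.
suff ord m (v : 'I_m -> M) : exists r (io : 'rV[k]_r -> M),
    [/\ linear io, injective io & forall t, exists w, io w = v t].
  have [r [io [io_lin io_inj hu]]] := ord _ (fun t : 'I_#|I| => u (enum_val t)).
  by exists r, io; split=> // i; rewrite -(enum_rankK i); apply: hu.
clear u; elim: m v => [|m IH] u.
  exists 0%N, (fun _ => 0); split=> [a v w|v w _|[]//].
    by rewrite scaler0 addr0.
  by apply/rowP => -[].
have [r [io [io_lin io_inj hu]]] := IH (fun t => u (lift ord0 t)).
have [r' [io' [io'_lin io'_inj hio [w0 hw0]]]] := row_embedding_extend (u ord0) io_lin io_inj.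
exists r', io'; split=> // t; case: (unliftP ord0 t) => [j ->|->]; last by exists w0.
by have [w <-] := hu j; apply: hio.
Qed.

Lemma free_spanning_family (V : vectType k) (S : V -> Prop) : exists s : seq V,
  [/\ free s, forall v, v \in s -> S v & forall v, S v -> v \in <<s>>%VS].
Proof.
suff ext N (s : seq V) : free s -> (forall v, v \in s -> S v) ->
    (\dim (fullv : {vspace V}) - size s <= N)%N -> exists s',
    [/\ free s', forall v, v \in s' -> S v & forall v, S v -> v \in <<s'>>%VS].
  by apply: (ext _ [::]) => //; rewrite /free /= span_nil dimv0.
elim: N s => [|N IH] s fs sS hN.
  exists s; split=> // v Sv; apply/negPn/negP => nv.
  have fvs : free (v :: s) by rewrite free_cons nv.
  have := dimvS (subvf <<v :: s>>%VS); rewrite (eqP fvs) /=.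
  by move: hN; set D := \dim _; lia.
have [spans|] := pselect (forall v, S v -> v \in <<s>>%VS); first by exists s.
move=> /existsNP [v /not_implyP [Sv nv]]; apply: (IH (v :: s)).
- by rewrite free_cons fs andbT; apply/negP.
- by move=> w; rewrite inE => /orP [/eqP ->|/sS].
- by move: hN => /=; lia.
Qed.

End FiniteSpans.

Lemma free_combination_inj (k : fieldType) (M : lmodType k) d (s : 'I_d -> M) :
  (forall w : 'I_d -> k, \sum_j w j *: s j = 0 -> forall j, w j = 0) ->
  linear (fun w : 'rV[k]_d => \sum_j w 0 j *: s j) /\
  injective (fun w : 'rV[k]_d => \sum_j w 0 j *: s j).
Proof.
move=> s_free; split=> [a v w|v w /eqP].
  by rewrite scaler_sumr -big_split; apply: eq_bigr => j _; rewrite !mxE scalerDl scalerA.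
rewrite -subr_eq0 -sumrB => /eqP vw; apply/rowP => j; apply/eqP; rewrite -subr_eq0.
apply/eqP/(s_free (fun j => v 0 j - w 0 j)); rewrite -[RHS]vw.
by apply: eq_bigr => i _; rewrite scalerBl.
Qed.

Section OrbitModules.
Variables (k : fieldType) (n : nat).
Local Notation Mat := 'M[k]_n.
Variables (K : Mat -> Prop) (M : lmodType k).
Hypothesis K_unit : forall A, K A -> A \in unitmx.

Lemma tensor_on_common m (Phi : 'I_m -> Mat -> M) : (forall b, tensor_on K (Phi b)) ->
  exists (I : finType) (g : I -> M) (c : 'I_m -> I -> Mat -> k),
    (forall b t, regular_on K (c b t)) /\
    forall b x, K x -> Phi b x = \sum_t c b t x *: g t.
Proof.
elim: m Phi => [|m IH] Phi hPhi.
  by exists 'I_0, (fun _ => 0), (fun _ _ _ => 0); split; case.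
have [I1 [g1 [c1 [h1 e1]]]] := IH (fun b => Phi (lift ord0 b)) (fun b => hPhi _).
have [I2 [g2 [S2 [h2 e2]]]] := hPhi ord0.
exists (I1 + I2)%type, (fun t => match t with inl i => g1 i | inr j => S2 j end),
  (fun b t => match unlift ord0 b, t with
              | Some b', inl i => c1 b' i
              | None, inr j => g2 j
              | _, _ => fun _ => 0 end).
split=> [b [i|j]|b x Kx]; try by case: (unlift ord0 b) => [b'|] //; apply: regular_const.
rewrite big_sumType /=; case: (unliftP ord0 b) => [b' ->|->].
  by rewrite e1 // [X in _ + X]big1 ?addr0 // => j _; rewrite scale0r.
by rewrite e2 // [X in X + _]big1 ?add0r // => j _; rewrite scale0r.
Qed.

Lemma tensor_on_free_expansion m (Phi : 'I_m -> Mat -> M) :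
  (forall b, tensor_on K (Phi b)) ->
  exists d (xs : 'I_d -> Mat) (bs : 'I_d -> 'I_m) (c : 'I_m -> 'I_d -> Mat -> k),
  [/\ forall j, K (xs j), forall b j, regular_on K (c b j),
      forall w : 'I_d -> k, \sum_j w j *: Phi (bs j) (xs j) = 0 -> forall j, w j = 0 &
      forall b x, K x -> Phi b x = \sum_j c b j x *: Phi (bs j) (xs j)].
Proof.
move=> hPhi; have [I [g [c [hc ec]]]] := tensor_on_common hPhi.
have [r [io [io_lin io_inj hio]]] := row_embedding g.
have [p hp] := choice hio.
pose O b x := \sum_t c b t x *: p t.
have ioO b x : K x -> io (O b x) = Phi b x.
  by move=> Kx; rewrite lin_sum // ec //; apply: eq_bigr => t _; rewrite linZ // hp.
have [s [s_free sS Sspan]] := free_spanning_family (fun v => exists b x, K x /\ v = O b x).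
have hs (j : 'I_(size s)) : exists bx, K bx.2 /\ s`_j = O bx.1 bx.2.
  by have [b [x [Kx ->]]] := sS _ (mem_nth 0 (ltn_ord j)); exists (b, x).
have [bx hbx] := choice hs.
have ios (j : 'I_(size s)) : io s`_j = Phi (bx j).1 (bx j).2 by case: (hbx j) => Kx ->; apply: ioO.
pose X := in_tuple s.
exists (size s), (fun j => (bx j).2), (fun j => (bx j).1),
  (fun b j x => \sum_t c b t x * coord X j (p t)).
split=> [j|b j|w|b x Kx]; first by case: (hbx j).
- by apply: regular_sum => // t; apply: regular_mul => //; apply: regular_const.
- move=> w0; have /freeP X_free : free X := s_free; apply: X_free.
  apply: io_inj; rewrite lin0 // -w0 lin_sum //.
  by apply: eq_bigr => j _; rewrite linZ // ios.
rewrite -ioO //; have /coord_span -> : O b x \in <<X>>%VS by apply: Sspan; exists b, x.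
rewrite lin_sum //; apply: eq_bigr => j _.
by rewrite linZ // ios linear_sum; congr (_ *: _); apply: eq_bigr => t _; rewrite linearZ.
Qed.

Variable act : Mat -> M -> M.
Hypotheses (K1 : K 1%:M) (KM : forall x y, K x -> K y -> K (x *m y)).
Hypothesis act_lin : forall x, K x -> linear (act x).
Hypothesis act1 : forall m, act 1%:M m = m.
Hypothesis actM : forall x y m, K x -> K y -> act (x *m y) m = act x (act y m).

Lemma finite_dim_submodule mm (u : 'I_mm -> M) :
  (forall b, tensor_on K (fun x => act x (u b))) ->
  exists d (aW : Mat -> 'rV[k]_d -> 'rV[k]_d) (kap : 'rV[k]_d -> M),
  [/\ rational_module K aW, linear kap, injective kap,
      forall x w, K x -> kap (aW x w) = act x (kap w) &
      forall b, exists w, kap w = u b].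
Proof.
move=> hu; have [d [xs [bs [c [Kxs hc s_free orb]]]]] := tensor_on_free_expansion hu.
pose s j := act (xs j) (u (bs j)).
pose kap (w : 'rV[k]_d) := \sum_j w 0 j *: s j.
have [kap_lin kap_inj] : linear kap /\ injective kap := free_combination_inj s_free.
pose aW x (w : 'rV[k]_d) := \sum_j w 0 j *: \row_i c (bs j) i (x *m xs j).
have kap_row (f : 'I_d -> k) : kap (\row_i f i) = \sum_i f i *: s i.
  by apply: eq_bigr => i _; rewrite mxE.
have kap_aW x w : K x -> kap (aW x w) = act x (kap w).
  move=> Kx; rewrite lin_sum // (lin_sum (act_lin Kx)); apply: eq_bigr => j _.
  rewrite linZ // (linZ (act_lin Kx)); congr (_ *: _).
  by rewrite kap_row /s -orb ?actM //; apply: KM.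
exists d, aW, kap; split=> //.
- split=> [x Kx a v w|w|x y w Kx Ky|w]; try apply: kap_inj.
  + by rewrite kap_lin !kap_aW // kap_lin act_lin.
  + by rewrite kap_aW.
  + rewrite kap_aW; last exact: KM.
    by rewrite !kap_aW // actM.
  apply: tensor_on_ord; apply: tensor_on_sum => j; apply: tensor_onZ.
    exact: regular_const.
  apply: (tensor_on_ext (Phi := fun x => \sum_i c (bs j) i (x *m xs j) *: delta_mx 0 i)).
    apply: tensor_on_sum => i; apply: tensor_onZ; last exact: tensor_on_const.
    by apply: regular_mulmxr => // y Ky; apply: KM.
  by move=> x _; rewrite [RHS]row_sum_delta; apply: eq_bigr => i _; rewrite mxE.
- by move=> b; exists (\row_j c b j 1%:M); rewrite kap_row -orb // act1.
Qed.

End OrbitModules.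

(* [itensor X Z E] models I(Z) ⊗ E inside k[X] ⊗ E: E-valued functions that are
   in k[X] ⊗ E and vanish on Z; they are also required to vanish off X, so that
   elements are determined by their values. *)
Definition itensor_spec (k : fieldType) (n : nat) (X Z : 'M[k]_n -> Prop)
    (E : lmodType k) (F : 'M[k]_n -> E) :=
  [/\ forall A, ~ X A -> F A = 0, forall A, Z A -> F A = 0 & tensor_on X F].

Record itensor (k : fieldType) (n : nat) (X Z : 'M[k]_n -> Prop) (E : lmodType k) :=
  ITensor { itfun : 'M[k]_n -> E; itfunP : itensor_spec X Z itfun }.

HB.instance Definition _ k n X Z E := gen_eqMixin (@itensor k n X Z E).
HB.instance Definition _ k n X Z E := gen_choiceMixin (@itensor k n X Z E).

Section ITensorModule.
Variables (k : fieldType) (n : nat) (X Z : 'M[k]_n -> Prop) (E : lmodType k).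
Local Notation T := (@itensor k n X Z E).

Lemma itensor_ext (u v : T) : itfun u =1 itfun v -> u = v.
Proof.
case: u v => [f hf] [g hg] /= /funext efg; subst g.
by congr ITensor; apply: Prop_irrelevance.
Qed.

Lemma itensor_spec0 : itensor_spec X Z (fun _ => (0 : E)).
Proof. by split=> //; apply: tensor_on_const. Qed.

Lemma itensor_specD (f g : 'M[k]_n -> E) : itensor_spec X Z f -> itensor_spec X Z g ->
  itensor_spec X Z (fun A => f A + g A).
Proof.
case=> f1 f2 f3 [g1 g2 g3]; split=> [A hA|A hA|]; last exact: tensor_onD.
- by rewrite f1 // g1 // addr0.
- by rewrite f2 // g2 // addr0.
Qed.

Lemma itensor_spec_linear (E' : lmodType k) (L : E -> E') (f : 'M[k]_n -> E) :
  linear L -> itensor_spec X Z f -> itensor_spec X Z (fun A => L (f A)).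
Proof.
move=> L_lin [f1 f2 f3]; split=> [A hA|A hA|]; last exact: tensor_on_linear.
- by rewrite f1 // lin0.
- by rewrite f2 // lin0.
Qed.

Lemma opp_linear : linear (fun e : E => - e).
Proof. by move=> a u v; rewrite opprD scalerN. Qed.

Lemma scale_linear (c : k) : linear (fun e : E => c *: e).
Proof. by move=> a u v; rewrite scalerDr !scalerA mulrC. Qed.

Definition itensor0 : T := ITensor itensor_spec0.
Definition itensorD (u v : T) : T := ITensor (itensor_specD (itfunP u) (itfunP v)).
Definition itensorN (u : T) : T := ITensor (itensor_spec_linear opp_linear (itfunP u)).
Definition itensorZ (c : k) (u : T) : T :=
  ITensor (itensor_spec_linear (scale_linear c) (itfunP u)).

Lemma itensorA : associative itensorD.
Proof. by move=> u v w; apply: itensor_ext => A /=; rewrite addrA. Qed.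
Lemma itensorC : commutative itensorD.
Proof. by move=> u v; apply: itensor_ext => A /=; rewrite addrC. Qed.
Lemma itensor0D : left_id itensor0 itensorD.
Proof. by move=> u; apply: itensor_ext => A /=; rewrite add0r. Qed.
Lemma itensorND : left_inverse itensor0 itensorN itensorD.
Proof. by move=> u; apply: itensor_ext => A /=; rewrite addNr. Qed.
Lemma itensorZA a b u : itensorZ a (itensorZ b u) = itensorZ (a * b) u.
Proof. by apply: itensor_ext => A /=; rewrite scalerA. Qed.
Lemma itensorZ1 : left_id 1 itensorZ.
Proof. by move=> u; apply: itensor_ext => A /=; rewrite scale1r. Qed.
Lemma itensorZDr : right_distributive itensorZ itensorD.
Proof. by move=> a u v; apply: itensor_ext => A /=; rewrite scalerDr. Qed.
Lemma itensorZDl v : {morph itensorZ^~ v : a b / a + b >-> itensorD a b}.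
Proof. by move=> a b; apply: itensor_ext => A /=; rewrite scalerDl. Qed.

End ITensorModule.

HB.instance Definition _ (k : fieldType) (n : nat) (X Z : 'M[k]_n -> Prop) (E : lmodType k) :=
  GRing.isZmodule.Build (@itensor k n X Z E)
    (@itensorA k n X Z E) (@itensorC k n X Z E) (@itensor0D k n X Z E) (@itensorND k n X Z E).
HB.instance Definition _ (k : fieldType) (n : nat) (X Z : 'M[k]_n -> Prop) (E : lmodType k) :=
  GRing.Zmodule_isLmodule.Build k (@itensor k n X Z E)
    (@itensorZA k n X Z E) (@itensorZ1 k n X Z E) (@itensorZDr k n X Z E) (@itensorZDl k n X Z E).

Definition nowhere {T : Type} (x : T) : Prop := False.

Section ITensorValues.
Variables (k : fieldType) (n : nat) (X Z : 'M[k]_n -> Prop) (E : lmodType k).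
Local Notation T := (@itensor k n X Z E).

Lemma itfunD (u v : T) A : itfun (u + v) A = itfun u A + itfun v A. Proof. by []. Qed.
Lemma itfunZ a (u : T) A : itfun (a *: u) A = a *: itfun u A. Proof. by []. Qed.

Lemma itfun_sum (I : Type) (s : seq I) (F : I -> T) A :
  itfun (\sum_(i <- s) F i) A = \sum_(i <- s) itfun (F i) A.
Proof. by elim: s => [|i s IH]; rewrite ?big_nil // !big_cons itfunD IH. Qed.

Lemma itfun_tensor_on (u : T) : tensor_on X (itfun u).
Proof. by case: (itfunP u). Qed.

Lemma itensor_spec_nowhere (F : 'M[k]_n -> E) :
  itensor_spec X Z F -> itensor_spec X nowhere F.
Proof. by case. Qed.

End ITensorValues.

Section ITensorActions.
Variables (k : fieldType) (n : nat).
Local Notation Mat := 'M[k]_n.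
Variables (X Z G K : Mat -> Prop) (E : lmodType k) (T : Mat -> E -> E).
Local Notation IT := (@itensor k n X Z E).

Hypothesis XG : forall A, X A -> G A.
Hypothesis XK : forall A x, K x -> (X (A *m x) <-> X A).
Hypothesis ZK : forall A x, K x -> Z A -> Z (A *m x).
Hypothesis T_lin : forall x, K x -> linear (T x).

Lemma itensor_specM (f : Mat -> k) (F : Mat -> E) : regular_on G f ->
  itensor_spec X Z F -> itensor_spec X Z (fun A => f A *: F A).
Proof.
move=> hf [f1 f2 f3]; split=> [A hA|A hA|].
- by rewrite f1 // scaler0.
- by rewrite f2 // scaler0.
- by apply: tensor_onZ => //; apply: regular_onS hf.
Qed.

Lemma itensor_spec_translate x (F : Mat -> E) : K x ->
  itensor_spec X Z F -> itensor_spec X Z (fun A => T x (F (A *m x))).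
Proof.
move=> Kx [f1 f2 f3]; split=> [A hA|A hA|].
- by rewrite f1 ?(lin0 (T_lin Kx)) // => /(XK A Kx).
- by rewrite f2 ?(lin0 (T_lin Kx)) //; apply: ZK.
- apply: (tensor_on_linear (T_lin Kx)); apply: tensor_on_mulmxr => // A XA.
  exact/(XK A Kx).
Qed.

(* Multiplication by f in k[G]; the identity when f is not regular on G. *)
Definition itmul (f : Mat -> k) (u : IT) : IT :=
  if pselect (regular_on G f) is left hf then ITensor (itensor_specM hf (itfunP u)) else u.

(* The twisted right-regular action (x.F)(A) = T x (F (A x)); the identity when
   x is not in K. *)
Definition itact (x : Mat) (u : IT) : IT :=
  if pselect (K x) is left Kx then ITensor (itensor_spec_translate Kx (itfunP u)) else u.

Lemma itmulE f u A : regular_on G f -> itfun (itmul f u) A = f A *: itfun u A.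
Proof. by move=> hf; rewrite /itmul; case: pselect. Qed.

Lemma itactE x u A : K x -> itfun (itact x u) A = T x (itfun u (A *m x)).
Proof. by move=> Kx; rewrite /itact; case: pselect. Qed.

Lemma itact_lin x : K x -> linear (itact x).
Proof.
move=> Kx a u v; apply: itensor_ext => A.
by rewrite itfunD itfunZ !itactE // itfunD itfunZ T_lin.
Qed.

Hypotheses (K1 : K 1%:M) (KM : forall x y, K x -> K y -> K (x *m y)).
Hypothesis T1 : forall e, T 1%:M e = e.
Hypothesis TM : forall x y e, K x -> K y -> T (x *m y) e = T x (T y e).
Hypothesis itact_orbits : forall u, tensor_on K (fun x => itact x u).

Lemma itact_rational : rational_module K itact.
Proof.
split=> [x Kx|m|x y m Kx Ky|m]; first exact: itact_lin.
- by apply: itensor_ext => A; rewrite itactE // mulmx1 T1.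
- apply: itensor_ext => A; rewrite itactE; last exact: KM.
  by rewrite !itactE // TM // mulmxA.
- exact/tensor_on_ord/itact_orbits.
Qed.

Hypothesis G_unit : forall A, G A -> A \in unitmx.
Hypothesis GK : forall A x, K x -> G A -> G (A *m x).

Lemma itensor_kGH_module : kGH_module G K itmul itact.
Proof.
split=> [|f hf a u v|f g m hf hg|f g m hf hg|c m|f g hf e|x f m Kx hf].
- exact: itact_rational.
- apply: itensor_ext => A.
  by rewrite itfunD itfunZ !itmulE // itfunD itfunZ scalerDr !scalerA mulrC.
- by apply: itensor_ext => A; rewrite itfunD !itmulE ?scalerDl //; apply: regular_add.
- by apply: itensor_ext => A; rewrite !itmulE ?scalerA //; apply: regular_mul.
- by apply: itensor_ext => A; rewrite itmulE //; apply: regular_const.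
- have hg : regular_on G g by apply: regular_ext hf e.
  apply: funext => u; apply: itensor_ext => A; rewrite !itmulE //.
  have [GA|nGA] := pselect (G A); first by rewrite e.
  by case: (itfunP u) => u0 _ _; rewrite u0 ?scaler0 // => /XG.
- have hfx : regular_on G (fun y => f (y *m x)).
    by apply: regular_mulmxr => // A GA; apply: GK.
  by apply: itensor_ext => A; rewrite itactE // !itmulE // itactE // (linZ (T_lin Kx)).
Qed.

End ITensorActions.

Section LocalFiniteness.
Variables (k : fieldType) (n : nat).
Local Notation Mat := 'M[k]_n.
Variables (X Z K : Mat -> Prop) (E : lmodType k) (T : Mat -> E -> E).
Local Notation IT := (@itensor k n X Z E).

Hypothesis XK : forall A x, K x -> (X (A *m x) <-> X A).
Hypothesis ZK : forall A x, K x -> Z A -> Z (A *m x).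
Hypothesis T_lin : forall x, K x -> linear (T x).
Hypothesis Z0 : forall A, ~ Z A.
Hypothesis T_tensor_on : forall e, tensor_on K (fun x => T x e).

Local Notation itact := (itact XK ZK T_lin).

Definition itpure_fun (g : Mat -> k) (e : E) (A : Mat) : E :=
  if `[< X A >] then g A *: e else 0.

Lemma itpure_spec g e : regular_on X g -> itensor_spec X Z (itpure_fun g e).
Proof.
move=> hg; split=> [A nXA|A /Z0 //|]; first by rewrite /itpure_fun; case: asboolP.
apply: (tensor_on_ext (tensor_onZ hg (tensor_on_const X e))) => A XA.
by rewrite /itpure_fun; case: asboolP.
Qed.

Definition itpure g (hg : regular_on X g) (e : E) : IT := ITensor (itpure_spec e hg).

Lemma itpure_lin g (hg : regular_on X g) : linear (itpure hg).
Proof.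
move=> a u v; apply: itensor_ext => A /=; rewrite /itpure_fun; case: asboolP => _.
  by rewrite scalerDr !scalerA mulrC.
by rewrite scaler0 addr0.
Qed.

Lemma itact_itpure g (hg : regular_on X g) e :
  tensor_on K (fun x => itact x (itpure hg e)).
Proof.
have [I [a [c [ha hc tr]]]] := regular_translates hg.
apply: (tensor_on_ext (Phi := fun x => \sum_i c i x *: itpure (ha i X) (T x e))).
  apply: tensor_on_sum => i; apply: tensor_onZ => //.
  exact: tensor_on_linear (itpure_lin _) (T_tensor_on e).
move=> x Kx; apply: itensor_ext => A; rewrite itactE // itfun_sum /= /itpure_fun.
case: asboolP => [XA|nXA]; case: asboolP => [XAx|nXAx].
- rewrite (linZ (T_lin Kx)) tr // scaler_suml.
  by apply: eq_bigr => i _; rewrite scalerA.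
- by case: nXAx; apply/(XK A Kx).
- by case: nXA; apply/(XK A Kx).
- by rewrite (lin0 (T_lin Kx)) big1 // => i _; rewrite scaler0.
Qed.

Lemma itact_tensor_on (u : IT) : tensor_on K (fun x => itact x u).
Proof.
case: (itfunP u) => u0 _ [I [g [S [hg e]]]].
have -> : u = \sum_i itpure (hg i) (S i).
  apply: itensor_ext => A; rewrite itfun_sum /= /itpure_fun.
  by case: asboolP => [XA|nXA]; [rewrite e | rewrite u0 // big1].
apply: (tensor_on_ext (Phi := fun x => \sum_i itact x (itpure (hg i) (S i)))).
  by apply: tensor_on_sum => i; apply: itact_itpure.
by move=> x Kx; rewrite lin_sum //; apply: itact_lin.
Qed.

End LocalFiniteness.

Lemma zariski_closed_unit (k : fieldType) (n : nat) (X : 'M[k]_n -> Prop) :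
  zariski_closed X -> forall A, X A -> A \in unitmx.
Proof. by case=> S [_ hS] A /hS []. Qed.

Lemma mulmxr_stable (k : fieldType) (n : nat) (X K : 'M[k]_n -> Prop) :
  (forall x y, X x -> X y -> X (x *m y)) -> (forall x, X x -> X (invmx x)) ->
  (forall A, X A -> A \in unitmx) -> (forall x, K x -> X x) ->
  forall A x, K x -> X (A *m x) <-> X A.
Proof.
move=> XM XV X_unit KX A x Kx; split=> [XAx|XA]; last exact/XM/KX.
by rewrite -(mulmxK (X_unit _ (KX _ Kx)) A); apply/XM/XV/KX.
Qed.

Lemma invmxM (k : fieldType) (n : nat) (A B : 'M[k]_n) :
  A \in unitmx -> B \in unitmx -> invmx (A *m B) = invmx B *m invmx A.
Proof.
move=> uA uB; have uAB : A *m B \in unitmx by rewrite unitmx_mul uA.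
have inv_mul : (invmx B *m invmx A) *m (A *m B) = 1%:M.
  by rewrite mulmxA (mulmxKV uA) (mulVmx uB).
by rewrite -[LHS]mul1mx -inv_mul -mulmxA (mulmxV uAB) mulmx1.
Qed.


Section ExactnessLift.
Variables (k : fieldType) (n : nat).
Local Notation Mat := 'M[k]_n.
Variables (G H : Mat -> Prop).
Hypothesis G_unit : forall A, G A -> A \in unitmx.
Hypotheses (GM : forall x y, G x -> G y -> G (x *m y)) (GV : forall x, G x -> G (invmx x)).
Hypothesis H_unit : forall A, H A -> A \in unitmx.
Hypotheses (H1 : H 1%:M) (HM : forall x y, H x -> H y -> H (x *m y)).
Hypothesis HV : forall x, H x -> H (invmx x).
Hypothesis HG : forall x, H x -> G x.

Variables (V : vectType k) (aV : Mat -> V -> V).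
Hypothesis aV_rat : rational_module H aV.
Local Notation E := 'End(V).

Definition repr_end (x : Mat) : E := linfun (aV x).

Lemma repr_endE x v : H x -> repr_end x v = aV x v.
Proof. by move=> Hx; apply: lfunE_lin; apply: (rm_lin aV_rat). Qed.

Definition end_act (x : Mat) (e : E) : E := (e \o repr_end (invmx x))%VF.

Lemma end_act_lin x : H x -> linear (end_act x).
Proof. by move=> _ a u v; rewrite /end_act comp_lfunDl comp_lfunZl. Qed.

Lemma end_act1 e : end_act 1%:M e = e.
Proof. by apply/lfunP => v; rewrite comp_lfunE invmx1 repr_endE // (rm_one aV_rat). Qed.

Lemma end_actM x y e : H x -> H y -> end_act (x *m y) e = end_act x (end_act y e).
Proof.
move=> Hx Hy; apply/lfunP => v; rewrite !comp_lfunE invmxM ?H_unit //.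
have [Hx' Hy'] := (HV Hx, HV Hy).
by rewrite !repr_endE ?(rm_mul aV_rat) //; apply: HM.
Qed.

Lemma repr_end_tensor_on : tensor_on H repr_end.
Proof.
pose B := vbasis (fullv : {vspace V}).
pose L j (w : V) : E := linfun (fun v => coord B j v *: w).
have LE j w v : L j w v = coord B j v *: w.
  by apply: lfunE_lin => a u z; rewrite linearP scalerDl scalerA.
apply: (tensor_on_ext (Phi := fun x => \sum_j L j (aV x B`_j))).
  apply: tensor_on_sum => j; apply: tensor_on_linear.
    move=> a u w; apply/lfunP => v.
    by rewrite add_lfunE scale_lfunE !LE scalerDr !scalerA mulrC.
  by have [r [ms [fs [hfs e]]]] := rm_loc aV_rat B`_j; exists 'I_r, fs, ms.
move=> x Hx; apply/lfunP => v; rewrite sum_lfunE repr_endE //.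
rewrite {2}(coord_vbasis (memvf v)) (lin_sum (rm_lin aV_rat Hx)).
by apply: eq_bigr => j _; rewrite LE (linZ (rm_lin aV_rat Hx)).
Qed.

Lemma end_act_tensor_on e : tensor_on H (fun x => end_act x e).
Proof.
apply: (tensor_on_linear (L := fun B : E => (e \o B)%VF)).
  by move=> a u v; rewrite comp_lfunDr comp_lfunZr.
exact: tensor_on_invmx repr_end_tensor_on.
Qed.

Let GH_stable := mulmxr_stable GM GV G_unit HG.
Let HH_stable := mulmxr_stable HM HV H_unit (fun x Hx => Hx).
Let nowhereK (A x : Mat) (_ : H x) : nowhere A -> nowhere (A *m x) := id.
Let HK (A x : Mat) (Hx : H x) (HA : H A) : H (A *m x) := HM HA Hx.
Let GK (A x : Mat) (Hx : H x) (GA : G A) : G (A *m x) := GM GA (HG Hx).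
Let GG (A : Mat) (GA : G A) : G A := GA.

(* The short exact sequence 0 -> I(H) ⊗ E -> k[G] ⊗ E -> k[H] ⊗ E -> 0. *)
Local Notation P := (@itensor k n G H E).
Local Notation Q := (@itensor k n G nowhere E).
Local Notation R := (@itensor k n H nowhere E).

Let aP := itact GH_stable HK end_act_lin.
Let aQ := itact GH_stable nowhereK end_act_lin.
Let aR := itact HH_stable nowhereK end_act_lin.
Let mP := itmul (X := G) (Z := H) (E := E) GG.
Let mQ := itmul (X := G) (Z := nowhere) (E := E) GG.
Let mR := itmul (X := H) (Z := nowhere) (E := E) HG.

Lemma Q_module : kGH_module G H mQ aQ.
Proof.
apply: itensor_kGH_module end_act1 end_actM _ G_unit GK => // u.
by apply: itact_tensor_on => [A []|]; apply: end_act_tensor_on.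
Qed.

Lemma R_module : kGH_module G H mR aR.
Proof.
apply: itensor_kGH_module end_act1 end_actM _ G_unit GK => // u.
by apply: itact_tensor_on => [A []|]; apply: end_act_tensor_on.
Qed.

Definition restrict (F : Mat -> E) (A : Mat) : E := if `[< H A >] then F A else 0.

Lemma itensor_spec_restrict (F : Mat -> E) :
  tensor_on H F -> itensor_spec H nowhere (restrict F).
Proof.
move=> F_tensor; split=> // [A nHA|]; first by rewrite /restrict; case: asboolP.
by apply: (tensor_on_ext F_tensor) => A HA; rewrite /restrict; case: asboolP.
Qed.

Definition incl (u : P) : Q := ITensor (itensor_spec_nowhere (itfunP u)).
Definition res (q : Q) : R :=
  ITensor (itensor_spec_restrict (tensor_onS HG (itfun_tensor_on q))).

Lemma incl_inj : injective incl.
Proof. by move=> u v /(congr1 (fun w : Q => itfun w)) /= e; apply: itensor_ext => A; rewrite e. Qed.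

Lemma incl_lin : linear incl.
Proof. by move=> a u v; apply: itensor_ext. Qed.

Lemma incl_act x u : H x -> incl (aP x u) = aQ x (incl u).
Proof. by move=> Hx; apply: itensor_ext => A; rewrite /= !itactE. Qed.

Lemma aP_tensor_on u : tensor_on H (fun x => aP x u).
Proof.
have aQ_tensor_on : tensor_on H (fun x => aQ x (incl u)).
  by apply: itact_tensor_on => [A []|]; apply: end_act_tensor_on.
have [d [xs [_ [c [Hxs hc _ orb]]]]] :=
  @tensor_on_free_expansion _ _ _ _ H_unit 1 (fun _ x => aQ x (incl u)) (fun=> aQ_tensor_on).
exists 'I_d, (c ord0), (fun j => aP (xs j) u); split=> // x Hx; apply: incl_inj.
rewrite incl_act // (orb ord0) // (lin_sum incl_lin); apply: eq_bigr => j _.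
by rewrite (linZ incl_lin) incl_act.
Qed.

Lemma P_module : kGH_module G H mP aP.
Proof. exact: itensor_kGH_module end_act1 end_actM aP_tensor_on G_unit GK. Qed.

Lemma incl_morphism : kGH_morphism G H mP aP mQ aQ incl.
Proof.
split=> [|f u hf|x u Hx]; [exact: incl_lin | | exact: incl_act].
by apply: itensor_ext => A; rewrite /= !itmulE.
Qed.

Lemma res_morphism : kGH_morphism G H mQ aQ mR aR res.
Proof.
split=> [a u v|f u hf|x u Hx]; apply: itensor_ext => A; rewrite /= /restrict.
- by case: asboolP; rewrite ?scaler0 ?addr0.
- by rewrite [RHS]itmulE //= /restrict; case: asboolP => HA; rewrite ?itmulE ?scaler0.
- rewrite [RHS]itactE //= /restrict; case: asboolP => HA; case: asboolP => HAx.
  + by rewrite itactE.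
  + by case: HAx; apply/(HH_stable A Hx).
  + by case: HA; apply/(HH_stable A Hx).
  + by rewrite (lin0 (end_act_lin Hx)).
Qed.

Lemma res_kernel q : res q = 0 <-> exists p, incl p = q.
Proof.
split=> [q0|[p <-]].
  have qH A : H A -> itfun q A = 0.
    move=> HA; have /(congr1 (fun w : R => itfun w A)) := q0.
    by rewrite /= /restrict; case: asboolP.
  have [F0 _ F_tensor] := itfunP q.
  by exists (ITensor (And3 F0 qH F_tensor)); apply: itensor_ext.
apply: itensor_ext => A; rewrite /= /restrict; case: asboolP => // HA.
by case: (itfunP p) => _ pH _; apply: pH.
Qed.

Lemma res_surj r : exists q, res q = r.
Proof.
have [r0 _ [I [g [S [hg e]]]]] := itfunP r.
have [ge hge] := choice (fun i => regular_extend G (hg i)).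
pose F A : E := if `[< G A >] then \sum_i ge i A *: S i else 0.
have F_spec : itensor_spec G nowhere F.
  split=> // [A nGA|]; first by rewrite /F; case: asboolP.
  apply: (tensor_on_ext (Phi := fun A => \sum_i ge i A *: S i)).
    by apply: tensor_on_sum => i; apply: tensor_onZ; [case: (hge i) | apply: tensor_on_const].
  by move=> A GA; rewrite /F; case: asboolP.
exists (ITensor F_spec); apply: itensor_ext => A; rewrite /= /restrict /F.
case: asboolP => [HA|nHA]; last by rewrite r0.
case: asboolP => [GA|]; last by move/(_ (HG HA)).
by rewrite e //; apply: eq_bigr => i _; have [_ ->] := hge i.
Qed.

Definition repr_end_res : R := ITensor (itensor_spec_restrict repr_end_tensor_on).

Lemma repr_end_res_fixed : fixed_vec H aR repr_end_res.
Proof.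
move=> x Hx; have [Hx' ux] := (HV Hx, H_unit Hx).
apply: itensor_ext => A; rewrite itactE //= /restrict.
case: asboolP => [HAx|nHAx]; case: asboolP => [HA|nHA].
- apply/lfunP => v.
  by rewrite comp_lfunE !repr_endE // -(rm_mul aV_rat) // mulmxK.
- by case: nHA; apply/(HH_stable A Hx).
- by case: nHAx; apply/(HH_stable A Hx).
- by rewrite /end_act comp_lfun0l.
Qed.

Lemma exact_lift : exact_in G H -> exists F : Mat -> E,
  [/\ itensor_spec G nowhere F, forall y h v, H h -> F (y *m h) v = F y (aV h v)
    & forall v, F 1%:M v = v].
Proof.
move=> exact_GH; have [_ _ lift] := exact_GH _ _ _ _ _ _ _ _ _ _ _
  P_module Q_module R_module incl_morphism res_morphism incl_inj res_kernel res_surj.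
have [q [q_fixed q_res]] := lift _ repr_end_res_fixed.
exists (itfun q); split=> [|y h v Hh|v]; first exact: itfunP.
- have [Hh' uh] := (HV Hh, H_unit Hh).
  have /(congr1 (fun w : Q => itfun w y)) := q_fixed h Hh; rewrite itactE // => <-.
  by rewrite comp_lfunE repr_endE // -(rm_mul aV_rat) // mulVmx // (rm_one aV_rat).
- have /(congr1 (fun w : R => itfun w 1%:M)) := q_res; rewrite /= /restrict.
  by case: asboolP => // _ ->; rewrite repr_endE // (rm_one aV_rat).
Qed.

End ExactnessLift.

Section ObservableEmbedding.
Variables (k : fieldType) (n : nat).
Local Notation Mat := 'M[k]_n.
Variables (G H : Mat -> Prop).
Hypothesis G_unit : forall A, G A -> A \in unitmx.
Hypotheses (G1 : G 1%:M) (GM : forall x y, G x -> G y -> G (x *m y)).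
Hypothesis GV : forall x, G x -> G (invmx x).
Hypothesis HG : forall x, H x -> G x.
Variables (V : vectType k) (aV : Mat -> V -> V) (F : Mat -> 'End(V)).
Hypothesis F_spec : itensor_spec G nowhere F.
Hypothesis F_equiv : forall y h v, H h -> F (y *m h) v = F y (aV h v).
Hypothesis F1 : forall v, F 1%:M v = v.

Lemma orbit_map_spec v : itensor_spec G nowhere (fun A => F A v).
Proof.
apply: (itensor_spec_linear (L := fun B : 'End(V) => B v)) F_spec.
by move=> a B C; rewrite add_lfunE scale_lfunE.
Qed.

Definition orbit_map v : itensor G nowhere V := ITensor (orbit_map_spec v).

Lemma orbit_map_lin : linear orbit_map.
Proof. by move=> a u v; apply: itensor_ext => A /=; rewrite linearP. Qed.

Let GG_stable := mulmxr_stable GM GV G_unit (fun x Gx => Gx).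
Let nowhereK (A x : Mat) (_ : G x) : nowhere A -> nowhere (A *m x) := id.
Let id_lin (x : Mat) (_ : G x) : linear (fun e : V => e) := fun _ _ _ => erefl.

Let rtrans := itact GG_stable nowhereK id_lin.

Lemma rtrans_tensor_on u : tensor_on G (fun x => rtrans x u).
Proof. by apply: itact_tensor_on => [A []|e]; apply: tensor_on_const. Qed.

Lemma rtrans_rational : rational_module G rtrans.
Proof. exact: itact_rational rtrans_tensor_on. Qed.

Lemma observable_embedding : exists (W : vectType k) (aW : Mat -> W -> W) (phi : V -> W),
  [/\ rational_module G aW,
      forall (a : k) (u v : V), phi (a *: u + v) = a *: phi u + phi v,
      injective phi &
      forall x v, H x -> phi (aV x v) = aW x (phi v)].
Proof.
pose B := vbasis (fullv : {vspace V}); have rat := rtrans_rational.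
have [d [aW [kap [aW_rat kap_lin kap_inj kap_equiv kap_onto]]]] :=
  finite_dim_submodule G_unit G1 GM (rm_lin rat) (rm_one rat) (rm_mul rat)
    (u := fun b : 'I_(\dim {:V}) => orbit_map B`_b) (fun b => rtrans_tensor_on _).
have [wb hwb] := choice kap_onto.
pose phi v := \sum_b coord B b v *: wb b.
have kap_phi v : kap (phi v) = orbit_map v.
  rewrite lin_sum // {2}(coord_vbasis (memvf v)) (lin_sum orbit_map_lin).
  by apply: eq_bigr => b _; rewrite linZ // hwb (linZ orbit_map_lin).
exists [the vectType k of 'rV[k]_d], aW, phi; split=> //.
- move=> a u v; rewrite /phi scaler_sumr -big_split /=; apply: eq_bigr => b _.
  by rewrite linearP scalerDl scalerA.
- move=> u v e; have : orbit_map u = orbit_map v by rewrite -!kap_phi e.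
  by move=> /(congr1 (fun w => itfun w 1%:M)) /=; rewrite !F1.
- move=> x v /[dup] Hx /HG Gx; apply: kap_inj; rewrite kap_equiv // !kap_phi.
  by apply: itensor_ext => A; rewrite itactE //= F_equiv.
Qed.

End ObservableEmbedding.

Theorem proposition4p9 (k : closedFieldType) (n : nat) (G H : 'M[k]_n -> Prop) :
  closed_subgroup G -> closed_subgroup H -> (forall x, H x -> G x) ->
  exact_in G H -> observable G H.
Proof.
move=> [/zariski_closed_unit G_unit [G1 GM GV]] [/zariski_closed_unit H_unit [H1 HM HV]].
move=> HG exact_GH V aV aV_rat.
have [F [F_spec F_equiv F1]] := exact_lift G_unit GM GV H_unit H1 HM HV HG aV_rat exact_GH.
exact (observable_embedding G_unit G1 GM GV HG F_spec F_equiv F1).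
Qed.
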